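(* Let $\Sigma$ be a finite alphabet, $n$ a positive integer and $\varphi\in\mathrm{FO}^2_n[<]$ a unique position formula. Let $u\in\Sigma^\star$ and $i\in[1,|u|]$ with $(u,i)\models\varphi$. Then $i=r(u)$ for some ranker $r\in R_n^\star$.
   Context: Words are finite structures with universe $\{1,\dots,|w|\}$, unary predicates $Q_a$ ($a\in\Sigma$) marking positions carrying $a$, and the order $<$. $\mathrm{FO}^2_n[<]$ is first-order logic over this signature using only the variables $x,y$, with quantifier depth at most $n$; $(w,i)$ denotes $w$ with $x$ interpreted as $i$. A formula $\varphi\in\mathrm{FO}^2[<]$ with free variable $x$ is a unique position formula if for every $w\in\Sigma^\star$ there is at most one $i\in[1,|w|]$ with $(w,i)\models\varphi$. Boundary positions: $\triangleright_a(w)=\min\{i:w_i=a\}$, $\triangleleft_a(w)=\max\{i:w_i=a\}$, $\triangleright_a(w,q)=\min\{i\in[q+1,|w|]:w_i=a\}$, $\triangleleft_a(w,q)=\max\{i\in[1,q-1]:w_i=a\}$ (undefined if empty). An $n$-ranker is a sequence $r=(p_1,\dots,p_n)$ of boundary positions with $r(w)=p_1(w)$ if $n=1$, undefined if $(p_1,\dots,p_{n-1})(w)$ is undefined, else $p_n(w,(p_1,\dots,p_{n-1})(w))$. $R_n^\star$ is the set of all $j$-rankers with $j\in[1,n]$. *)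

From mathcomp Require Import all_boot.
Set Implicit Arguments. Unset Strict Implicit. Unset Printing Implicit Defensive.

Section Words.
Variable Sigma : finType.

(** letter carried at (1-based) position i, None if out of range *)
Definition letter (w : seq Sigma) (i : nat) : option Sigma :=
  nth None (map Some w) i.-1.

Definition apos (w : seq Sigma) (a : Sigma) : seq nat :=
  [seq i <- iota 1 (size w) | letter w i == Some a].

Inductive var := VX | VY.
Definition var_eqb (u v : var) : bool :=
  match u, v with VX, VX | VY, VY => true | _, _ => false end.

Inductive form :=
| FTrue
| FFalse
| FLetter of Sigma & var
| FLt of var & var
| FEq of var & var
| FNot of form
| FAnd of form & form
| FOr of form & form
| FEx of var & form
| FAll of var & form.

Fixpoint qdepth (f : form) : nat :=
  match f with
  | FNot g => qdepth g
  | FAnd g h | FOr g h => maxn (qdepth g) (qdepth h)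
  | FEx _ g | FAll _ g => (qdepth g).+1
  | _ => 0
  end.

Fixpoint free (v : var) (f : form) : bool :=
  match f with
  | FTrue | FFalse => false
  | FLetter _ u => var_eqb u v
  | FLt u1 u2 | FEq u1 u2 => var_eqb u1 v || var_eqb u2 v
  | FNot g => free v g
  | FAnd g h | FOr g h => free v g || free v h
  | FEx u g | FAll u g => ~~ var_eqb u v && free v g
  end.

Definition upd (e : var -> nat) (v : var) (j : nat) : var -> nat :=
  fun u => if var_eqb u v then j else e u.

Fixpoint sat (w : seq Sigma) (e : var -> nat) (f : form) : Prop :=
  match f with
  | FTrue => True
  | FFalse => False
  | FLetter a v => letter w (e v) = Some a
  | FLt u v => e u < e v
  | FEq u v => e u = e v
  | FNot g => ~ sat w e g
  | FAnd g h => sat w e g /\ sat w e h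
  | FOr g h => sat w e g \/ sat w e h
  | FEx v g => exists j, 1 <= j <= size w /\ sat w (upd e v j) g
  | FAll v g => forall j, 1 <= j <= size w -> sat w (upd e v j) g
  end.

(** (w,i) |= f : x interpreted as i (y is also set to i; irrelevant when
    y is not free in f) *)
Definition models (w : seq Sigma) (i : nat) (f : form) : Prop :=
  sat w (fun _ => i) f.

Definition only_x_free (f : form) : Prop := free VY f = false.

Definition unique_position (f : form) : Prop :=
  only_x_free f /\
  forall (w : seq Sigma) (i j : nat),
    1 <= i <= size w -> 1 <= j <= size w ->
    models w i f -> models w j f -> i = j.

(** (true, a) stands for |>_a (leftmost), (false, a) for <|_a (rightmost) *)
Definition bpos := (bool * Sigma)%type.

Definition bpos_abs (p : bpos) (w : seq Sigma) : option nat :=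
  let ps := apos w p.2 in
  if p.1 then ohead ps else ohead (rev ps).

Definition bpos_rel (p : bpos) (w : seq Sigma) (q : nat) : option nat :=
  if p.1 then ohead [seq i <- apos w p.2 | q < i]
  else ohead (rev [seq i <- apos w p.2 | i < q]).

(** an n-ranker (p_1, ..., p_n) is represented as (p_1, [:: p_2; ...; p_n]) *)
Definition ranker := (bpos * seq bpos)%type.

Definition ranker_len (r : ranker) : nat := (size r.2).+1.

Definition ranker_eval (r : ranker) (w : seq Sigma) : option nat :=
  foldl (fun (o : option nat) p =>
           match o with Some q => bpos_rel p w q | None => None end)
        (bpos_abs r.1 w) r.2.

End Words.

From mathcomp Require Import all_boot zify.
From Stdlib Require Import Classical.
Set Implicit Arguments. Unset Strict Implicit. Unset Printing Implicit Defensive.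

(* Suppose position i of u is reached by no ranker of length at most n, and
   duplicate the letter at i.  In the new word both copies of that letter are
   n-round FO^2-equivalent to (u, i), so phi holds at two positions.  With k
   rounds left, Duplicator keeps the pebbled positions on the same letter and
   in the same order relative to every position definable by a ranker of
   length at most k.  A move to an undefinable position is answered through a
   definable "twin" with the same letter, on the same side of the old pebble
   and in the same gap between positions definable with one step less. *)

Lemma ex_minn_classic (P : nat -> Prop) :
  (exists n, P n) -> exists2 n, P n & forall m, P m -> n <= m.
Proof.
move=> [n Pn]; apply: NNPP => no_min.
suff no_le : forall m, m <= n -> ~ P m by exact: no_le n (leqnn n) Pn.
elim: n {Pn} => [|n IHn] m le_mn Pm; apply: no_min; exists m => // m' Pm'.
- by rewrite leqn0 in le_mn; rewrite (eqP le_mn).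
- by rewrite leqNgt; apply/negP => lt_m'm; apply: (IHn m') Pm'; lia.
Qed.

Lemma ex_maxn_classic (P : nat -> Prop) b :
  (exists2 n, n <= b & P n) ->
  exists n, [/\ n <= b, P n & forall m, m <= b -> P m -> m <= n].
Proof.
move=> [n le_nb Pn].
have [|m [le_mb Pbm] min_m] := @ex_minn_classic (fun m => m <= b /\ P (b - m)).
  by exists (b - n); split; [lia | rewrite subKn].
exists (b - m); split; rewrite ?leq_subr // => m' le_m'b Pm'.
have: m <= b - m' by apply: min_m; split; [lia | rewrite subKn].
lia.
Qed.

Definition order_type (a b : nat) : bool * bool := (a < b, b < a).

Lemma order_type_sym a b c d :
  order_type a b = order_type c d -> order_type b a = order_type d c.
Proof. by rewrite /order_type => -[-> ->]. Qed.

Lemma order_typeP a b c d :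
  order_type a b = order_type c d <-> ((a < b <-> c < d) /\ (b < a <-> d < c)).
Proof.
rewrite /order_type; split=> [[-> ->] //|[lt_ab lt_ba]].
by congr pair; apply/idP/idP => ?; [apply/lt_ab|apply/lt_ab|apply/lt_ba|apply/lt_ba].
Qed.

Lemma order_type_refl a b : order_type a a = order_type b b.
Proof. by rewrite /order_type !ltnn. Qed.

Lemma order_type_eq a b c d : order_type a b = order_type c d -> a = b -> c = d.
Proof. move=> /order_typeP; lia. Qed.

Lemma order_type_bump h a b : order_type (bump h a) (bump h b) = order_type a b.
Proof. apply/order_typeP; rewrite /bump; lia. Qed.

Lemma order_type_unbump i q d :
  d != i -> order_type q (bump i.+1 d) = order_type (unbump i q) d.
Proof. move=> /eqP ne_di; apply/order_typeP; rewrite /bump /unbump; lia. Qed.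

Lemma ohead_filter_iota (P : pred nat) m n x :
  m <= x < m + n -> P x -> (forall y, m <= y < x -> ~~ P y) ->
  ohead [seq y <- iota m n | P y] = Some x.
Proof.
move=> x_in Px before_x.
have -> : n = (x - m) + (m + n - x) by lia.
rewrite iotaD filter_cat.
have -> : [seq y <- iota m (x - m) | P y] = [::].
  by apply/eqP; rewrite -size_eq0 size_filter eqn0Ngt -has_count;
     apply/hasPn => y; rewrite mem_iota => y_in; apply: before_x; lia.
have -> : m + n - x = (m + n - x).-1.+1 by lia.
rewrite subnKC; last lia.
by rewrite /= Px.
Qed.

Lemma ohead_rev_filter_iota (P : pred nat) m n x :
  m <= x < m + n -> P x -> (forall y, x < y < m + n -> ~~ P y) ->
  ohead (rev [seq y <- iota m n | P y]) = Some x.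
Proof.
move=> x_in Px after_x.
have -> : n = (x - m + 1) + (m + n - x.+1) by lia.
rewrite iotaD filter_cat.
have -> : [seq y <- iota (m + (x - m + 1)) (m + n - x.+1) | P y] = [::].
  by apply/eqP; rewrite -size_eq0 size_filter eqn0Ngt -has_count;
     apply/hasPn => y; rewrite mem_iota => y_in; apply: after_x; lia.
rewrite cats0 iotaD filter_cat rev_cat subnKC; last lia.
by rewrite /= Px.
Qed.

Section Rankers.
Variable Sigma : finType.
Implicit Types (w : seq Sigma) (b : Sigma).

Lemma letter_leq_size w p b : letter w p = Some b -> p <= size w.
Proof.
rewrite /letter leqNgt => letter_p; apply/negP => lt_wp.
by rewrite nth_default ?size_map in letter_p; last lia.
Qed.

Lemma letter_in_range w p : 0 < p <= size w -> exists b, letter w p = Some b.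
Proof.
case: w => [|a w] /= p_in; first lia.
by exists (nth a (a :: w) p.-1); rewrite /letter (nth_map a) //=; lia.
Qed.

Lemma bpos_rel_next w b d x :
  d < x -> letter w x = Some b -> (forall y, d < y < x -> letter w y != Some b) ->
  bpos_rel (true, b) w d = Some x.
Proof.
move=> lt_dx letter_x no_b; rewrite /bpos_rel /apos /= -filter_predI.
apply: ohead_filter_iota; first by have := letter_leq_size letter_x; lia.
  by rewrite /= lt_dx letter_x eqxx.
move=> y y_lt_x /=; case: (ltnP d y) => //= le_dy; apply: no_b; lia.
Qed.

Lemma bpos_rel_prev w b d x :
  0 < x < d -> letter w x = Some b -> (forall y, x < y < d -> letter w y != Some b) ->
  bpos_rel (false, b) w d = Some x.
Proof.
move=> x_lt_d letter_x no_b; rewrite /bpos_rel /apos /= -filter_predI.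
apply: ohead_rev_filter_iota; first by have := letter_leq_size letter_x; lia.
  by rewrite /= letter_x eqxx andbT; case/andP: x_lt_d.
move=> y x_lt_y /=; case: (ltnP y d) => //= le_dy; apply: no_b; lia.
Qed.

Lemma bpos_abs_first w b : bpos_abs (true, b) w = bpos_rel (true, b) w 0.
Proof.
rewrite /bpos_abs /bpos_rel /= (all_filterP _) //.
by apply/allP => y; rewrite mem_filter mem_iota => /andP[_ /andP[]].
Qed.

Lemma bpos_abs_last w b : bpos_abs (false, b) w = bpos_rel (false, b) w (size w).+1.
Proof.
rewrite /bpos_abs /bpos_rel /= (all_filterP _) //.
by apply/allP => y; rewrite mem_filter mem_iota => /andP[_ /andP[_]]; rewrite add1n.
Qed.

Definition definable w k d :=
  exists r : ranker Sigma, ranker_len r <= k /\ ranker_eval r w = Some d.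

Lemma definable_mono w k k' d : k <= k' -> definable w k d -> definable w k' d.
Proof. by move=> le_kk' [r [len_r eval_r]]; exists r; split=> //; lia. Qed.

Lemma definable_abs w k p d : 0 < k -> bpos_abs p w = Some d -> definable w k d.
Proof. by move=> k_gt0 abs_p; exists (p, [::]). Qed.

Lemma definable_rel w k p d d' :
  definable w k d -> bpos_rel p w d = Some d' -> definable w k.+1 d'.
Proof.
move=> [[p1 s] [len_r eval_r]] rel_p; exists (p1, rcons s p).
move: len_r eval_r; rewrite /ranker_len /ranker_eval /= size_rcons foldl_rcons.
by move=> ? ->.
Qed.

(* The twin is the last occurrence of the letter of x before the first
   position after x that is k-definable (or before the end of w). *)
Lemma definable_twin_right w k x : 0 < x <= size w ->
  exists e, [/\ x <= e <= size w, letter w e = letter w x, definable w k.+1 e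
    & forall d, definable w k d -> order_type e d = order_type x d].
Proof.
move=> x_in; case: (classic (definable w k x)) => [def_x | undef_x].
  by exists x; split=> //; [lia | exact: definable_mono def_x].
have [b letter_x] := letter_in_range x_in.
have [|D [x_lt_D def_D] min_D] :=
  @ex_minn_classic (fun D => x < D /\ (D = (size w).+1 \/ definable w k D)).
  by exists (size w).+1; split; [lia | left].
have ex_b : exists y, (y < D) && (letter w y == Some b).
  by exists x; rewrite x_lt_D letter_x eqxx.
have ub_b : forall y, (y < D) && (letter w y == Some b) -> y <= D.
  by move=> y /andP[? _]; lia.
case: (ex_maxnP ex_b ub_b) => e /andP[e_lt_D /eqP letter_e] max_e.
have le_xe : x <= e by apply: max_e; rewrite x_lt_D letter_x eqxx.
have rel_D : bpos_rel (false, b) w D = Some e.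
  apply: bpos_rel_prev => //; first lia.
  move=> y /andP[lt_ey lt_yD]; apply/negP => /eqP letter_y.
  by have := max_e y; rewrite lt_yD letter_y eqxx => /(_ isT); lia.
exists e; split.
- by have := letter_leq_size letter_e; lia.
- by rewrite letter_e letter_x.
- case: def_D => [D_end | def_D]; last exact: definable_rel def_D rel_D.
  by apply: (definable_abs (p := (false, b))); rewrite // bpos_abs_last -D_end.
- move=> d def_d; have min_d : x < d -> D <= d by move=> ?; apply: min_D; split; [|right].
  have: d <> x by move=> d_x; apply: undef_x; rewrite -d_x.
  by move=> ?; apply/order_typeP; lia.
Qed.

Lemma definable_twin_left w k x : 0 < x <= size w ->
  exists e, [/\ 0 < e <= x, letter w e = letter w x, definable w k.+1 e
    & forall d, definable w k d -> order_type e d = order_type x d].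
Proof.
move=> x_in; case: (classic (definable w k x)) => [def_x | undef_x].
  by exists x; split=> //; [lia | exact: definable_mono def_x].
have [b letter_x] := letter_in_range x_in.
have [|D [le_Dx [D_lt_x def_D] max_D]] :=
  @ex_maxn_classic (fun D => D < x /\ (D = 0 \/ definable w k D)) x.
  by exists 0 => //; split; [lia | left].
have ex_b : exists y, (D < y) && (letter w y == Some b).
  by exists x; rewrite D_lt_x letter_x eqxx.
case: (ex_minnP ex_b) => e /andP[D_lt_e /eqP letter_e] min_e.
have le_ex : e <= x by apply: min_e; rewrite D_lt_x letter_x eqxx.
have rel_D : bpos_rel (true, b) w D = Some e.
  apply: bpos_rel_next => // y /andP[lt_Dy lt_ye]; apply/negP => /eqP letter_y.
  by have := min_e y; rewrite lt_Dy letter_y eqxx => /(_ isT); lia.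
exists e; split.
- by lia.
- by rewrite letter_e letter_x.
- case: def_D => [D0 | def_D]; last exact: definable_rel def_D rel_D.
  by apply: (definable_abs (p := (true, b))); rewrite // bpos_abs_first -D0.
- move=> d def_d; have max_d : d < x -> d <= D.
    by move=> ?; apply: max_D; [lia | split; [|right]].
  have: d <> x by move=> d_x; apply: undef_x; rewrite -d_x.
  by move=> ?; apply/order_typeP; lia.
Qed.

End Rankers.

Section FO2Equivalence.
Variable Sigma : finType.
Implicit Types (w v : seq Sigma) (e : var -> nat).

(* One pebble pair sits on p and q; a round places the other pebble pair, and
   its order relative to p and q must agree. *)
Fixpoint fo2_equiv k w v p q : Prop :=
  letter w p = letter v q /\
  if k is k'.+1 then
    (forall p', 0 < p' <= size w -> exists q', [/\ 0 < q' <= size v,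
       order_type p' p = order_type q' q & fo2_equiv k' w v p' q']) /\
    (forall q', 0 < q' <= size v -> exists p', [/\ 0 < p' <= size w,
       order_type p' p = order_type q' q & fo2_equiv k' w v p' q'])
  else True.

Lemma fo2_equiv_letter k w v p q : fo2_equiv k w v p q -> letter w p = letter v q.
Proof. by case: k => [|k] []. Qed.

Lemma fo2_equiv_sym k w v p q : fo2_equiv k w v p q -> fo2_equiv k v w q p.
Proof.
elim: k p q => [|k IHk] p q /= [letter_pq rest]; split=> //.
case: rest => forth back; split.
- move=> q' /back [p' [p'_in ord_p' equiv_p']].
  by exists p'; split; rewrite ?ord_p' //; exact: IHk.
- move=> p' /forth [q' [q'_in ord_q' equiv_q']].
  by exists q'; split; rewrite ?ord_q' //; exact: IHk.
Qed.

Lemma fo2_equivW k w v p q : fo2_equiv k.+1 w v p q -> fo2_equiv k w v p q.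
Proof.
elim: k p q => [|k IHk] p q /= [letter_pq [forth back]]; split=> //; split.
- by move=> p' /forth [q' [? ? /IHk]]; exists q'.
- by move=> q' /back [p' [? ? /IHk]]; exists p'.
Qed.

Definition fo2_equiv_val k w v e e' :=
  (forall x, fo2_equiv k w v (e x) (e' x)) /\
  order_type (e VX) (e VY) = order_type (e' VX) (e' VY).

Lemma fo2_equiv_val_sym k w v e e' :
  fo2_equiv_val k w v e e' -> fo2_equiv_val k v w e' e.
Proof. by case=> equiv_e ord_e; split=> [x|]; [exact: fo2_equiv_sym | rewrite ord_e]. Qed.

Lemma fo2_equiv_val_order k w v e e' x y :
  fo2_equiv_val k w v e e' -> order_type (e x) (e y) = order_type (e' x) (e' y).
Proof.
case=> _ ord_e; case: x; case: y => //; try exact: order_type_refl.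
exact: order_type_sym.
Qed.

Lemma fo2_equiv_val_upd k w v e e' x j : fo2_equiv_val k.+1 w v e e' ->
  0 < j <= size w -> exists j', 0 < j' <= size v /\
  fo2_equiv_val k w v (upd e x j) (upd e' x j').
Proof.
case=> equiv_e ord_e j_in.
have equivW_e z := fo2_equivW (equiv_e z).
case: x.
- have [_ [/(_ j j_in) [j' [j'_in ord_j equiv_j]] _]] := equiv_e VY.
  by exists j'; split=> //; split=> [[]|]; rewrite /upd //=; exact: equivW_e.
- have [_ [/(_ j j_in) [j' [j'_in ord_j equiv_j]] _]] := equiv_e VX.
  by exists j'; split=> //; split=> [[]|]; rewrite /upd //=; exact: order_type_sym.
Qed.

Lemma sat_fo2_equiv (f : form Sigma) k w v e e' : qdepth f <= k ->
  fo2_equiv_val k w v e e' -> sat w e f -> sat v e' f.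
Proof.
elim: f k w v e e' => [||a x|x y|x y|g IHg|g IHg h IHh|g IHg h IHh|x g IHg|x g IHg]
  k w v e e' /= depth_f equiv_e //.
- by rewrite (fo2_equiv_letter (equiv_e.1 x)).
- by move: (fo2_equiv_val_order x y equiv_e); rewrite /order_type => -[->].
- exact: order_type_eq (fo2_equiv_val_order x y equiv_e).
- by move=> not_g sat_g; apply/not_g/(IHg _ _ _ _ _ depth_f (fo2_equiv_val_sym equiv_e)).
- by case=> ? ?; split; [apply: (IHg k w v e) | apply: (IHh k w v e)] => //; lia.
- by case=> ?; [left; apply: (IHg k w v e) | right; apply: (IHh k w v e)] => //; lia.
- case: k depth_f equiv_e => [|k] // depth_g equiv_e [j [j_in sat_g]].
  have [j' [j'_in equiv_j]] := fo2_equiv_val_upd x equiv_e j_in.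
  by exists j'; split=> //; exact: IHg equiv_j sat_g.
- case: k depth_f equiv_e => [|k] // depth_g equiv_e sat_g j' j'_in.
  have [j [j_in equiv_j]] := fo2_equiv_val_upd x (fo2_equiv_val_sym equiv_e) j'_in.
  exact: IHg depth_g (fo2_equiv_val_sym equiv_j) (sat_g j j_in).
Qed.

Lemma models_fo2_equiv (f : form Sigma) k w v p q : qdepth f <= k ->
  fo2_equiv k w v p q -> models w p f -> models v q f.
Proof.
move=> depth_f equiv_pq; apply: sat_fo2_equiv depth_f _.
by split=> [_ //|]; exact: order_type_refl.
Qed.

End FO2Equivalence.

Section Stutter.
Variable Sigma : finType.
Implicit Types (w : seq Sigma).

Definition stutter w i := take i w ++ drop i.-1 w.

Lemma size_stutter w i : 0 < i <= size w -> size (stutter w i) = (size w).+1.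
Proof. by move=> i_in; rewrite size_cat size_takel ?size_drop; lia. Qed.

Lemma letter_stutter w i q : 0 < i <= size w ->
  letter (stutter w i) q = letter w (unbump i q).
Proof.
move=> i_in; rewrite /letter /stutter map_cat nth_cat size_map size_takel; last lia.
rewrite /unbump; case: ltnP => [lt_qi | le_iq].
- by rewrite map_take nth_take //; congr nth; lia.
- by rewrite map_drop nth_drop; congr nth; lia.
Qed.

Lemma letter_stutter_bump w i d : 0 < i <= size w ->
  letter (stutter w i) (bump i.+1 d) = letter w d.
Proof. by move=> i_in; rewrite letter_stutter //; congr letter; rewrite /bump /unbump; lia. Qed.

Variables (w : seq Sigma) (i K : nat).
Hypotheses (i_in : 0 < i <= size w) (i_undef : ~ definable w K i).

Definition stutter_agree k p q :=
  letter w p = letter (stutter w i) q /\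
  forall d, definable w k d -> order_type p d = order_type q (bump i.+1 d).

Lemma definable_neq k d : k <= K -> definable w k d -> d != i.
Proof.
move=> le_kK def_d; apply/eqP => d_i; apply: i_undef.
by rewrite -d_i; exact: definable_mono def_d.
Qed.

Lemma stutter_agreeW k p q : stutter_agree k.+1 p q -> stutter_agree k p q.
Proof. by case=> letter_pq ord_pq; split=> // d /(definable_mono (leqnSn k)) /ord_pq. Qed.

Lemma stutter_forth k p q p' : stutter_agree k.+1 p q ->
  0 < q <= size (stutter w i) -> 0 < p' <= size w ->
  exists q', [/\ 0 < q' <= size (stutter w i), order_type p' p = order_type q' q
    & stutter_agree k p' q'].
Proof.
move=> agree_pq q_in p'_in; have [_ ord_pq] := agree_pq.
have twin_agree e : letter w e = letter w p' ->
    (forall d, definable w k d -> order_type e d = order_type p' d) ->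
    stutter_agree k p' (bump i.+1 e).
  move=> letter_e ord_e; split=> [|d def_d].
    by rewrite letter_stutter_bump // letter_e.
  by rewrite order_type_bump ord_e.
have bump_in e : 0 < e <= size w -> 0 < bump i.+1 e <= size (stutter w i).
  by rewrite size_stutter // /bump; lia.
case: (ltngtP p p') => [lt_pp' | lt_p'p | <-].
- have [e [e_in letter_e def_e ord_e]] := definable_twin_right k p'_in.
  exists (bump i.+1 e); split; [apply: bump_in; lia | | exact: twin_agree].
  by move/order_typeP: (ord_pq e def_e) => ?; apply/order_typeP; lia.
- have [e [e_in letter_e def_e ord_e]] := definable_twin_left k p'_in.
  exists (bump i.+1 e); split; [apply: bump_in; lia | | exact: twin_agree].
  by move/order_typeP: (ord_pq e def_e) => ?; apply/order_typeP; lia.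
- exists q; split=> //; [exact: order_type_refl | exact: stutter_agreeW].
Qed.

Lemma stutter_back k p q q' : k < K -> stutter_agree k.+1 p q ->
  0 < p <= size w -> 0 < q' <= size (stutter w i) ->
  exists p', [/\ 0 < p' <= size w, order_type p' p = order_type q' q
    & stutter_agree k p' q'].
Proof.
move=> lt_kK agree_pq p_in q'_in; have [_ ord_pq] := agree_pq.
set x := unbump i q'.
have x_in : 0 < x <= size w by move: q'_in; rewrite size_stutter // /x /unbump; lia.
have twin_agree e : letter w e = letter w x ->
    (forall d, definable w k d -> order_type e d = order_type x d) ->
    stutter_agree k e q'.
  move=> letter_e ord_e; split=> [|d def_d].
    by rewrite letter_stutter // letter_e.
  by rewrite order_type_unbump ?(definable_neq (ltnW lt_kK) def_d) // ord_e.
case: (ltngtP q q') => [lt_qq' | lt_q'q | <-].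
- have [e [e_in letter_e def_e ord_e]] := definable_twin_right k x_in.
  have ord_q'e := order_type_unbump q' (definable_neq lt_kK def_e).
  exists e; split; [lia | | exact: twin_agree].
  move/order_typeP: (ord_pq e def_e) => ?; move/order_typeP: ord_q'e => ?.
  by apply/order_typeP; lia.
- have [e [e_in letter_e def_e ord_e]] := definable_twin_left k x_in.
  have ord_q'e := order_type_unbump q' (definable_neq lt_kK def_e).
  exists e; split; [lia | | exact: twin_agree].
  move/order_typeP: (ord_pq e def_e) => ?; move/order_typeP: ord_q'e => ?.
  by apply/order_typeP; lia.
- exists p; split=> //; [exact: order_type_refl | exact: stutter_agreeW].
Qed.

Lemma stutter_fo2_equiv k p q : k <= K ->
  0 < p <= size w -> 0 < q <= size (stutter w i) -> stutter_agree k p q ->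
  fo2_equiv k w (stutter w i) p q.
Proof.
elim: k p q => [|k IHk] p q le_kK p_in q_in agree_pq;
  have [letter_pq _] := agree_pq; split=> //.
split=> [p' p'_in | q' q'_in].
- have [q' [q'_in ord_q' agree_q']] := stutter_forth agree_pq q_in p'_in.
  by exists q'; split=> //; apply: IHk => //; exact: ltnW.
- have [p' [p'_in ord_p' agree_p']] := stutter_back le_kK agree_pq p_in q'_in.
  by exists p'; split=> //; apply: IHk => //; exact: ltnW.
Qed.

Lemma fo2_equiv_stutter j : i <= j <= i.+1 -> fo2_equiv K w (stutter w i) i j.
Proof.
move=> j_in; apply: stutter_fo2_equiv => //; first by rewrite size_stutter //; lia.
split=> [|d def_d].
  by rewrite letter_stutter //; congr letter; rewrite /unbump; lia.
move/eqP: (definable_neq (leqnn K) def_d) => ?.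
by apply/order_typeP; rewrite /bump; lia.
Qed.

End Stutter.

Theorem lemma3p11 (Sigma : finType) (n : nat) (phi : form Sigma) :
  0 < n -> qdepth phi <= n -> unique_position phi ->
  forall (u : seq Sigma) (i : nat), 1 <= i <= size u -> models u i phi ->
  exists r : ranker Sigma, 1 <= ranker_len r <= n /\ ranker_eval r u = Some i.
Proof.
move=> _ depth_phi [_ unique_phi] u i i_in sat_i.
apply: NNPP => no_ranker.
have i_undef : ~ definable u n i by move=> [r [len_r eval_r]]; apply: no_ranker; exists r.
have sat_stutter j : i <= j <= i.+1 -> models (stutter u i) j phi.
  by move=> j_in; apply: models_fo2_equiv depth_phi (fo2_equiv_stutter i_in i_undef j_in) sat_i.
have := unique_phi _ i i.+1 _ _ (sat_stutter i _) (sat_stutter i.+1 _).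
by rewrite size_stutter //; lia.
Qed.
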